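(* Let $p$ be a prime, $D$ the quaternion algebra over $\mathbb{Q}$ ramified exactly at $\{p,\infty\}$, $\mathcal{O}$ a maximal order, and $\lambda,\mu\in\mathcal{O}$ with $N(\lambda)=p-1$, $N(\mu)=p$, $\mathrm{tr}(r)=0$ where $r=\lambda\overline{\mu}$. Let $g=\begin{pmatrix}1&\lambda\\0&\mu\end{pmatrix}$, $A=g\overline{g}^T$, and for $\theta\in\mathbb{Q}$, $\theta>0$, let $W_\theta=\{\nu\in M_2(\mathcal{O})^\times:\nu A\overline{\nu}^T=\theta A\}$. Then $W_\theta$ consists exactly of the matrices $\nu=\begin{pmatrix}\alpha&\beta\\\gamma&\delta\end{pmatrix}\in M_2(\mathcal{O})^\times$ such that \[pN(p\alpha+\overline{r}\gamma)+N\big(p(\alpha r+p\beta)+\overline{r}(\gamma r+p\delta)\big)=\theta p^3,\] \[pN(\gamma)+N(\gamma r+p\delta)=\theta p^2,\] \[p\alpha\overline{\gamma}+(\alpha r+p\beta)\overline{(\gamma r+p\delta)}=-\theta p\,\overline{r}.\]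
   Context: $x\mapsto\overline{x}$ is quaternion conjugation, $N(x)=x\overline{x}$ the reduced norm, $\mathrm{tr}(x)=x+\overline{x}$ the reduced trace. For a matrix $M$ over $D$, $\overline{M}^T$ is the transpose of the entrywise conjugate. $M_2(\mathcal{O})^\times=\mathrm{GL}_2(D)\cap M_2(\mathcal{O})$. *)

From HB Require Import structures.
From mathcomp Require Import all_boot all_order all_algebra.
From mathcomp Require Import ring.
Set Implicit Arguments. Unset Strict Implicit. Unset Printing Implicit Defensive.
Import Order.TTheory GRing.Theory Num.Theory.
Local Open Scope ring_scope.

(* The quaternion algebra (a,b)_Q : Q-basis 1,i,j,k with i^2 = a, j^2 = b, k = ij = -ji. *)
Record quat (a b : rat) := Quat { q0 : rat; q1 : rat; q2 : rat; q3 : rat }.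
Arguments Quat {a b}.

Section QuatAlgebra.
Variables a b : rat.
Local Notation Q := (quat a b).

Definition quat_tup (x : Q) := (q0 x, q1 x, q2 x, q3 x).
Definition tup_quat (t : rat * rat * rat * rat) : Q :=
  let: (x0, x1, x2, x3) := t in Quat x0 x1 x2 x3.
Lemma quat_tupK : cancel quat_tup tup_quat. Proof. by case. Qed.
HB.instance Definition _ := Choice.copy Q (can_type quat_tupK).

Definition qadd (x y : Q) : Q :=
  Quat (q0 x + q0 y) (q1 x + q1 y) (q2 x + q2 y) (q3 x + q3 y).
Definition qopp (x : Q) : Q := Quat (- q0 x) (- q1 x) (- q2 x) (- q3 x).
Definition qzero : Q := Quat 0 0 0 0.
Definition qone : Q := Quat 1 0 0 0.
Definition qmul (x y : Q) : Q :=
  Quat (q0 x * q0 y + a * q1 x * q1 y + b * q2 x * q2 y - a * b * q3 x * q3 y)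
       (q0 x * q1 y + q1 x * q0 y - b * q2 x * q3 y + b * q3 x * q2 y)
       (q0 x * q2 y + q2 x * q0 y + a * q1 x * q3 y - a * q3 x * q1 y)
       (q0 x * q3 y + q3 x * q0 y + q1 x * q2 y - q2 x * q1 y).

Lemma qeq (x y : Q) : q0 x = q0 y -> q1 x = q1 y -> q2 x = q2 y -> q3 x = q3 y -> x = y.
Proof. by case: x => ????; case: y => ???? /= -> -> -> ->. Qed.

Lemma qaddA : associative qadd.
Proof. by move=> x y z; apply: qeq; rewrite /= addrA. Qed.
Lemma qaddC : commutative qadd.
Proof. by move=> x y; apply: qeq; rewrite /= addrC. Qed.
Lemma qadd0 : left_id qzero qadd.
Proof. by move=> x; apply: qeq; rewrite /= add0r. Qed.
Lemma qaddN : left_inverse qzero qopp qadd.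
Proof. by move=> x; apply: qeq; rewrite /= addNr. Qed.
HB.instance Definition _ := GRing.isZmodule.Build Q qaddA qaddC qadd0 qaddN.

Lemma qmulA : associative qmul.
Proof. by move=> x y z; apply: qeq; rewrite /=; ring. Qed.
Lemma qmul1 : left_id qone qmul.
Proof. by move=> x; apply: qeq; rewrite /=; ring. Qed.
Lemma qmulr1 : right_id qone qmul.
Proof. by move=> x; apply: qeq; rewrite /=; ring. Qed.
Lemma qmulDl : left_distributive qmul qadd.
Proof. by move=> x y z; apply: qeq; rewrite /=; ring. Qed.
Lemma qmulDr : right_distributive qmul qadd.
Proof. by move=> x y z; apply: qeq; rewrite /=; ring. Qed.
Lemma qone_neq0 : qone != qzero.
Proof. by apply/eqP => /(congr1 (@q0 a b)) /= /eqP; rewrite oner_eq0. Qed.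
HB.instance Definition _ :=
  GRing.Zmodule_isNzRing.Build Q qmulA qmul1 qmulr1 qmulDl qmulDr qone_neq0.

Definition qconj (x : Q) : Q := Quat (q0 x) (- q1 x) (- q2 x) (- q3 x).
Definition qnorm (x : Q) : Q := x * qconj x.
Definition qtr (x : Q) : Q := x + qconj x.
Definition qrat (c : rat) : Q := Quat c 0 0 0.

Definition qcoords (x : Q) : 'rV[rat]_4 :=
  \row_(i < 4) [:: q0 x; q1 x; q2 x; q3 x]`_i.

Definition is_lattice (O : Q -> Prop) : Prop :=
  exists e : 'I_4 -> Q,
    \det (\matrix_(i < 4) qcoords (e i)) != 0 /\
    forall x, O x <-> exists n : 'I_4 -> int, x = \sum_(i < 4) (n i)%:~R * e i.

Definition is_order (O : Q -> Prop) : Prop :=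
  [/\ O 1, (forall x y, O x -> O y -> O (x * y)) & is_lattice O].

Definition is_maximal_order (O : Q -> Prop) : Prop :=
  is_order O /\ forall O' : Q -> Prop, is_order O' -> (forall x, O x -> O' x) ->
                                        forall x, O' x -> O x.

Definition mx2 (x y z w : Q) : 'M[Q]_2 :=
  \matrix_(i < 2, j < 2)
    if i == ord0 then (if j == ord0 then x else y) else (if j == ord0 then z else w).

Definition conjT (M : 'M[Q]_2) : 'M[Q]_2 := (map_mx qconj M)^T.

(* M_2(O)^x = GL_2(D) \cap M_2(O) *)
Definition in_GL2 (M : 'M[Q]_2) : Prop :=
  exists M' : 'M[Q]_2, M *m M' = 1%:M /\ M' *m M = 1%:M.
Definition in_M2O_units (O : Q -> Prop) (M : 'M[Q]_2) : Prop :=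
  in_GL2 M /\ forall i j, O (M i j).

End QuatAlgebra.

(* At infinity: ramified iff a < 0 and b < 0.
   At a prime l: ramified iff z^2 = a x^2 + b y^2 has no nontrivial solution in Q_l,
   i.e. iff for some n there is no primitive integer solution of the congruence
   z^2 - a x^2 - b y^2 = 0 mod l^n (l-adic compactness). *)
Definition ramified_infty (a b : int) : Prop := a < 0 /\ b < 0.

Definition ramified_at (a b : int) (l : nat) : Prop :=
  ~ (forall n : nat, exists x y z : int,
        ~~ [&& (l%:Z %| x)%Z, (l%:Z %| y)%Z & (l%:Z %| z)%Z] /\
        ((l ^ n)%:Z %| z ^+ 2 - a * x ^+ 2 - b * y ^+ 2)%Z).

Definition ramified_exactly_p_infty (a b : int) (p : nat) : Prop :=
  a != 0 /\ b != 0 /\ ramified_infty a b /\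
  forall l : nat, prime l -> (ramified_at a b l <-> l = p).

From mathcomp Require Import all_boot all_algebra ring.
Import GRing.Theory Num.Theory.
Set Implicit Arguments. Unset Strict Implicit. Unset Printing Implicit Defensive.
Local Open Scope ring_scope.

(* With [r = lam mu^*] one has [A = mx2 p r r^* p], [r^* = -r] and [r r^* = p^2 - p].
   For [B = mx2 1 r 0 p] and [C = mx2 p r^* 0 1] we get [B diag(p, 1) B^* = p A], so the
   three displayed quantities are [p] times the entries (0,0) of [C X C^*] and (1,1),
   (0,1) of [X], where [X = nu A nu^*]. As [X] is Hermitian, [X = theta A] amounts to
   [X11 = theta p], [X01 = theta r] and [X00 = theta p]: the first two are the last two
   equations divided by [p], and given them the first equation reads
   [p^3 X00 = theta p^4]. *)

Section QuaternionArithmetic.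
Variables a b : rat.
Local Notation Q := (quat a b).
Local Notation qrat := (qrat a b).
Implicit Types (x y z w : Q) (c : rat).

Lemma qrat_nat (n : nat) : n%:R = qrat n%:R :> Q.
Proof.
elim: n => [|n IHn]; first exact: qeq.
by rewrite -!natr1 IHn; apply: qeq => /=; ring.
Qed.

Lemma qratC c x : qrat c * x = x * qrat c.
Proof. by apply: qeq => /=; ring. Qed.

Lemma qratM c d : qrat c * qrat d = qrat (c * d).
Proof. by apply: qeq => /=; ring. Qed.

Lemma qratX c n : qrat c ^+ n = qrat (c ^+ n).
Proof. by elim: n => [|n IHn]; rewrite ?expr0 // !exprS IHn qratM. Qed.

Lemma qrat_mulI c x y : c != 0 -> qrat c * x = qrat c * y -> x = y.
Proof.
move=> c_neq0 /(congr1 (fun u => qrat c^-1 * u)).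
by rewrite !mulrA qratM mulVf // !mul1r.
Qed.

Lemma qconjM x y : qconj (x * y) = qconj y * qconj x.
Proof. by apply: qeq => /=; ring. Qed.

Lemma qconjK : involutive (@qconj a b).
Proof. by move=> x; apply: qeq => /=; rewrite ?opprK. Qed.

Lemma qconj_rat c : qconj (qrat c) = qrat c.
Proof. by apply: qeq => /=; rewrite ?oppr0. Qed.

Lemma qconj0 : qconj 0 = 0 :> Q.
Proof. by apply: qeq => /=; rewrite ?oppr0. Qed.

Lemma qconj1 : qconj 1 = 1 :> Q.
Proof. by apply: qeq => /=; rewrite ?oppr0. Qed.

Lemma qnormM x y : qnorm (x * y) = qnorm x * qnorm y.
Proof. by apply: qeq => /=; ring. Qed.

Lemma qnorm_conj x : qnorm (qconj x) = qnorm x.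
Proof. by apply: qeq => /=; ring. Qed.

Lemma qconjN_qtr x : qtr x = 0 -> qconj x = - x.
Proof. by rewrite /qtr addrC => /eqP; rewrite addr_eq0 => /eqP. Qed.

End QuaternionArithmetic.

Section Mx2.
Variables a b : rat.
Local Notation Q := (quat a b).
Implicit Types (x y z w : Q).

Lemma ord2P (i : 'I_2) : i = ord0 \/ i = ord_max.
Proof. by case: i => [[|[|//]] ?]; [left|right]; apply: val_inj. Qed.

Lemma mx2_entries (M : 'M[Q]_2) :
  M = mx2 (M ord0 ord0) (M ord0 ord_max) (M ord_max ord0) (M ord_max ord_max).
Proof.
by apply/matrixP => i j; rewrite mxE; case: (ord2P i) => ->; case: (ord2P j) => ->.
Qed.

Lemma mx2_eq x y z w x' y' z' w' :
  mx2 x y z w = mx2 x' y' z' w' <-> [/\ x = x', y = y', z = z' & w = w'].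
Proof.
split=> [/matrixP E|[-> -> -> ->] //].
by split; [move: (E ord0 ord0) | move: (E ord0 ord_max) | move: (E ord_max ord0)
  | move: (E ord_max ord_max)]; rewrite !mxE.
Qed.

Lemma mulmx_mx2 x y z w x' y' z' w' :
  mx2 x y z w *m mx2 x' y' z' w' =
  mx2 (x * x' + y * z') (x * y' + y * w') (z * x' + w * z') (z * y' + w * w').
Proof.
apply/matrixP => i j; rewrite !mxE big_ord_recl big_ord1 !mxE.
by case: (ord2P i) => ->; case: (ord2P j) => ->.
Qed.

Lemma conjT_mx2 x y z w :
  conjT (mx2 x y z w) = mx2 (qconj x) (qconj z) (qconj y) (qconj w).
Proof.
by apply/matrixP => i j; rewrite !mxE; case: (ord2P i) => ->; case: (ord2P j) => ->.
Qed.

Lemma scale_mx2 c x y z w : c *: mx2 x y z w = mx2 (c * x) (c * y) (c * z) (c * w).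
Proof.
by apply/matrixP => i j; rewrite !mxE; case: (ord2P i) => ->; case: (ord2P j) => ->.
Qed.

Lemma mx2_upper_mul_conjT x y :
  mx2 1 x 0 y *m conjT (mx2 1 x 0 y) =
  mx2 (1 + qnorm x) (x * qconj y) (qconj (x * qconj y)) (qnorm y).
Proof.
rewrite conjT_mx2 mulmx_mx2 qconj0 qconj1 qconjM qconjK.
by rewrite !(mulr0, mulr1, mul0r, add0r, addr0).
Qed.

End Mx2.

Section DiagonalHermitianForm.
Variables a b : rat.
Local Notation Q := (quat a b).
Implicit Types (s t u v x : Q) (c : rat).

Definition hform c s t u v : Q := qrat a b c * s * qconj u + t * qconj v.

Lemma hform_self c s t : hform c s t s t = qrat a b c * qnorm s + qnorm t.
Proof. by rewrite /hform /qnorm mulrA. Qed.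

Lemma hformDl c s t s' t' u v :
  hform c (s + s') (t + t') u v = hform c s t u v + hform c s' t' u v.
Proof. by apply: qeq => /=; ring. Qed.

Lemma hformMl c x s t u v : hform c (x * s) (x * t) u v = x * hform c s t u v.
Proof. by apply: qeq => /=; ring. Qed.

Lemma hformDr c s t u v u' v' :
  hform c s t (u + u') (v + v') = hform c s t u v + hform c s t u' v'.
Proof. by apply: qeq => /=; ring. Qed.

Lemma hformMr c x s t u v : hform c s t (x * u) (x * v) = hform c s t u v * qconj x.
Proof. by apply: qeq => /=; ring. Qed.

End DiagonalHermitianForm.

Section PureHermitianMatrix.
Variables (a b p : rat) (r : quat a b).
Hypotheses (p_neq0 : p != 0) (r_pure : qconj r = - r)
  (r_norm : r * qconj r = qrat a b (p ^+ 2 - p)).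
Local Notation Q := (quat a b).
Local Notation P := (qrat a b p).
Local Notation A := (mx2 P r (qconj r) P).
Implicit Types (x y u v : Q) (theta : rat).

Definition Aform x y u v : Q :=
  (x * P + y * qconj r) * qconj u + (x * r + y * P) * qconj v.

Lemma mx2_Aform x y u v :
  mx2 x y u v *m A *m conjT (mx2 x y u v) =
  mx2 (Aform x y x y) (Aform x y u v) (Aform u v x y) (Aform u v u v).
Proof. by rewrite conjT_mx2 !mulmx_mx2. Qed.

Lemma Aform_conj x y u v : Aform u v x y = qconj (Aform x y u v).
Proof. by apply: qeq => /=; ring. Qed.

(* [B diag(p, 1) B^* = P A] for the shear [B = mx2 1 r 0 P]. *)
Lemma hform_shear x y u v :
  hform p x (x * r + P * y) u (u * r + P * v) = P * Aform x y u v.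
Proof.
have -> : hform p x (x * r + P * y) u (u * r + P * v) =
          P * Aform x y u v + x * (r * qconj r - qrat a b (p ^+ 2 - p)) * qconj u.
  by apply: qeq => /=; ring.
by rewrite r_norm subrr mulr0 mul0r addr0.
Qed.

Lemma hermitian_eq_scale_iff x z w theta :
  mx2 x z (qconj z) w = qrat a b theta *: A <->
  [/\ P * (P * x * P + P * z * r) + qconj r * (P * qconj z * P + P * w * r)
        = qrat a b theta * P ^+ 3,
      P * w = qrat a b theta * P ^+ 2
    & P * z = - (qrat a b theta * P * qconj r)].
Proof.
set T := qrat a b theta.
have r_sqr : r * r = - qrat a b (p ^+ 2 - p) by rewrite -r_norm r_pure mulrN opprK.
have conj_Tr : qconj (T * r) = T * qconj r by rewrite qconjM qconj_rat qratC.
have w_iff : P * w = T * P ^+ 2 <-> w = T * P.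
  by rewrite expr2 mulrA -qratC; split=> [/(qrat_mulI p_neq0)|->].
have z_iff : P * z = - (T * P * qconj r) <-> z = T * r.
  by rewrite r_pure mulrN opprK [T * P]qratC -mulrA; split=> [/(qrat_mulI p_neq0)|->].
have x_iff : z = T * r -> w = T * P ->
    P * (P * x * P + P * z * r) + qconj r * (P * qconj z * P + P * w * r) = T * P ^+ 3
    <-> x = T * P.
  move=> -> ->; rewrite conj_Tr r_pure qratX.
  have -> : P * (P * x * P + P * (T * r) * r) + - r * (P * (T * - r) * P + P * (T * P) * r) =
        qrat a b (p ^+ 3) * (x - T * P) + T * qrat a b (p ^+ 3)
        + T * qrat a b (p ^+ 2) * (r * r + qrat a b (p ^+ 2 - p)).
    by apply: qeq => /=; ring.
  rewrite r_sqr addNr mulr0 addr0.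
  split=> [E|->]; last by rewrite subrr mulr0 add0r.
  apply/eqP; rewrite -subr_eq0; apply/eqP.
  apply: (qrat_mulI (expf_neq0 3 p_neq0)); apply: (addIr (T * qrat a b (p ^+ 3))).
  by rewrite mulr0 add0r.
rewrite scale_mx2 mx2_eq.
split=> [[xE zE _ wE]|[eq1 /w_iff wE /z_iff zE]].
  by split; [apply/(x_iff zE wE) | apply/w_iff | apply/z_iff].
by split; [apply/(x_iff zE wE) | | rewrite zE conj_Tr | ].
Qed.

Lemma mx2_conjugate_iff al be ga de theta :
  let nu := mx2 al be ga de in
  nu *m A *m conjT nu = qrat a b theta *: A <->
  [/\ P * qnorm (P * al + qconj r * ga)
        + qnorm (P * (al * r + P * be) + qconj r * (ga * r + P * de))
        = qrat a b theta * P ^+ 3,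
      P * qnorm ga + qnorm (ga * r + P * de) = qrat a b theta * P ^+ 2
    & P * al * qconj ga + (al * r + P * be) * qconj (ga * r + P * de)
        = - (qrat a b theta * P * qconj r)].
Proof.
rewrite /= mx2_Aform (Aform_conj al be ga de) -!hform_self.
rewrite hformDl !hformMl !hformDr !hformMr !hform_shear (Aform_conj al be ga de).
rewrite qconj_rat qconjK.
rewrite -[P * al * _ + _]/(hform p al _ ga _) hform_shear.
exact: hermitian_eq_scale_iff.
Qed.

End PureHermitianMatrix.

Theorem corollary5p7 (p : nat) (a b : int)
  (O : quat a%:~R b%:~R -> Prop) (lam mu : quat a%:~R b%:~R) (theta : rat) :
  prime p ->
  ramified_exactly_p_infty a b p ->
  is_maximal_order O ->
  O lam -> O mu ->
  qnorm lam = (p.-1)%:R ->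
  qnorm mu = p%:R ->
  qtr (lam * qconj mu) = 0 ->
  0 < theta ->
  let r := lam * qconj mu in
  let g := mx2 1 lam 0 mu in
  let A := g *m conjT g in
  forall nu : 'M[quat a%:~R b%:~R]_2,
    (in_M2O_units O nu /\ nu *m A *m conjT nu = qrat _ _ theta *: A)
    <->
    (in_M2O_units O nu /\
     let al := nu ord0 ord0 in let be := nu ord0 ord_max in
     let ga := nu ord_max ord0 in let de := nu ord_max ord_max in
     [/\ p%:R * qnorm (p%:R * al + qconj r * ga)
           + qnorm (p%:R * (al * r + p%:R * be) + qconj r * (ga * r + p%:R * de))
           = qrat _ _ theta * p%:R ^+ 3,
         p%:R * qnorm ga + qnorm (ga * r + p%:R * de) = qrat _ _ theta * p%:R ^+ 2
       & p%:R * al * qconj ga + (al * r + p%:R * be) * qconj (ga * r + p%:R * de)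
           = - (qrat _ _ theta * p%:R * qconj r)]).
Proof.
move=> p_prime _ _ _ _ lam_norm mu_norm r_tr _ r g A nu.
have p_gt0 := prime_gt0 p_prime.
have r_norm : r * qconj r = qrat _ _ (p%:R ^+ 2 - p%:R).
  rewrite -[r * _]/(qnorm r) qnormM qnorm_conj lam_norm mu_norm !qrat_nat qratM.
  by rewrite -subn1 natrB // mulrBl expr2 mul1r.
have -> : A = mx2 p%:R r (qconj r) p%:R.
  by rewrite /A mx2_upper_mul_conjT lam_norm mu_norm nat1r prednK.
apply: and_iff_compat_l.
rewrite [in X in X <-> _](mx2_entries nu) !qrat_nat.
apply: mx2_conjugate_iff => //; first by rewrite pnatr_eq0 -lt0n.
exact: qconjN_qtr.
Qed.
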